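(* If $X$ is a locally compact Hausdorff space and $Y$ is an MG-space, then $X\times Y$ is an MG-space.
   Context: A space $X$ is Menger if for each sequence $(\mathcal{U}_n)$ of open covers of $X$ there is a sequence $(\mathcal{V}_n)$ with each $\mathcal{V}_n$ a finite subset of $\mathcal{U}_n$ and $\bigcup_{n}\bigcup\mathcal{V}_n=X$. A space $X$ is Menger generated (an MG-space) if a subset $U\subseteq X$ is open in $X$ whenever $U\cap M$ is open in $M$ for every Menger subspace $M$ of $X$. *)

From mathcomp Require Import all_boot all_order.
From mathcomp Require Import all_classical all_reals all_analysis.
Set Implicit Arguments. Unset Strict Implicit. Unset Printing Implicit Defensive.
Local Open Scope classical_set_scope.

Definition open_in {T : topologicalType} (M U : set T) : Prop :=
  exists V : set T, open V /\ U = V `&` M.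

Definition open_cover_of {T : topologicalType} (M : set T) (C : set (set T)) : Prop :=
  (forall U, C U -> open_in M U) /\ M `<=` \bigcup_(U in C) U.

Definition menger_subspace {T : topologicalType} (M : set T) : Prop :=
  forall Us : nat -> set (set T),
    (forall n, open_cover_of M (Us n)) ->
    exists Vs : nat -> set (set T),
      (forall n, finite_set (Vs n) /\ Vs n `<=` Us n) /\
      M `<=` \bigcup_n \bigcup_(U in Vs n) U.

Definition MG_space (T : topologicalType) : Prop :=
  forall U : set T,
    (forall M : set T, menger_subspace M -> open_in M (U `&` M)) -> open U.

(* Let U be open in every Menger subspace and (x, y) in U.  A product C x M
   of a compact C and a Menger M is Menger (by the tube lemma, an open cover of
   C x M is refined by the tubes C x N covered by finitely many of its members).
   Applied to K x {y}, K a compact neighbourhood of x, and using regularity of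
   X, this yields a compact neighbourhood C of x with C x {y} in U.  The set W
   of those b with C x {b} in U is open in Y: for M Menger, U agrees on C x M
   with an open V, and the tube lemma makes {b | C x {b} in V} open, so W meets
   M in a relatively open set, and Y is MG.  Then C x W is a neighbourhood of
   (x, y) inside U. *)

From mathcomp Require Import all_boot all_order.
From mathcomp Require Import all_classical all_reals all_analysis.
Local Open Scope classical_set_scope.

Definition finite_subfamilies {T : Type} (D : set (set T)) :
    set_system (set (set T)) :=
  filter_from [set F0 | finite_set F0 /\ F0 `<=` D]
    (fun F0 => [set F | (finite_set F /\ F `<=` D) /\ F0 `<=` F]).

Lemma finite_subfamilies_filter {T : Type} (D : set (set T)) :
  Filter (finite_subfamilies D).
Proof.
apply: filter_from_filter; first by exists set0; split; [exact: finite_set0|].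
move=> F1 F2 [fF1 F1D] [fF2 F2D]; exists (F1 `|` F2).
  by split; [rewrite finite_setU | rewrite subUset].
by move=> F [FD F12]; split; split => // V ?; apply: F12; [left | right].
Qed.

Section Tube.
Context {X Y : topologicalType}.

Lemma tube_finite_subcover (C : set X) (y : Y) (D : set (set (X * Y))) :
  compact C -> (forall V, D V -> open V) ->
  C `*` [set y] `<=` \bigcup_(V in D) V ->
  exists2 F, finite_set F /\ F `<=` D &
    \forall b \near y, C `*` [set b] `<=` \bigcup_(V in F) V.
Proof.
(* Compactness in the form [near_covering], for the filter of finite
   subfamilies of D times the neighbourhoods of y. *)
move=> /compact_near_coveringP cC oD CyD.
have subfam_filter := finite_subfamilies_filter D.
have [|[A B] /= [[F0 [fF0 F0D] AF0] nB] sub] := cC _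
    (filter_prod (finite_subfamilies D) (nbhs y))
    (fun Fb c => (\bigcup_(V in Fb.1) V) (c, Fb.2))
    (filter_prod_filter subfam_filter (nbhs_filter y)).
  move=> c Cc; have [V DV Vcy] := CyD (c, y) (conj Cc erefl).
  have [[A B] /= [nA nB] AB] : nbhs (c, y) V.
    by apply: open_nbhs_nbhs; split => //; exact: oD.
  apply: (filter_pair_set _ _ (P := A) (P' := [set Fb | Fb.1 V /\ B Fb.2])).
    by move=> c' [F b] Ac' [/= FV Bb]; exists V => //; exact: AB.
  split => //.
  apply: (filter_pair_set _ _ (P := [set F | F V]) (P' := B)) => //.
  split => //; exists [set V]; last by move=> F [_ VF]; exact: VF.
  by split; [exact: finite_set1 | move=> _ ->].
have AF0' : A F0 := AF0 F0 (conj (conj fF0 F0D) (fun _ => id)).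
exists F0 => //; apply: filterS nB => b Bb [c b'] [Cc /= ->].
exact: sub (F0, b) (conj AF0' Bb) c Cc.
Qed.

Lemma tube_lemma (C : set X) (V : set (X * Y)) :
  compact C -> open V -> open [set b | C `*` [set b] `<=` V].
Proof.
move=> cC oV; rewrite openE => b CbV.
have [|F [_ FV]] := @tube_finite_subcover C b [set V] cC _
  (fun p Cp => ex_intro2 _ _ V erefl (CbV p Cp)); first by move=> _ ->.
by apply: filterS => b' sub p /sub [W /FV ->].
Qed.

End Tube.

Definition menger_open {T : topologicalType} (U : set T) : Prop :=
  forall M : set T, menger_subspace M -> open_in M (U `&` M).

Lemma subset_of_trace_eq {T : Type} (A M U V : set T) :
  U `&` M = V `&` M -> A `<=` M -> A `<=` U -> A `<=` V.
Proof.
move=> UV AM AU a Aa.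
by have [] : (V `&` M) a by rewrite -UV; split; [exact: AU | exact: AM].
Qed.

Lemma menger_subspace1 {T : topologicalType} (y : T) : menger_subspace [set y].
Proof.
move=> Us hUs.
have /choice [U hU] n : exists U, Us n U /\ U y.
  by have [U ? ?] := (hUs n).2 y erefl; exists U.
exists (fun n => [set U n]); split.
  by move=> n; split; [exact: finite_set1 | move=> _ ->; case: (hU n)].
by move=> _ ->; exists 0%N => //; exists (U 0%N) => //; case: (hU 0%N).
Qed.

Definition tube_refinement {X Y : topologicalType} (C : set X) (M : set Y)
    (Us : set (set (X * Y))) : set (set Y) :=
  [set N | open_in M N /\
    exists2 F, finite_set F /\ F `<=` Us & C `*` N `<=` \bigcup_(U in F) U].

Section MengerSetX.
Context {X Y : topologicalType} {C : set X} {M : set Y}.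
Hypothesis cC : compact C.

Lemma open_cover_tube_refinement Us :
  open_cover_of (C `*` M) Us -> open_cover_of M (tube_refinement C M Us).
Proof.
move=> [UsM covUs]; split; first by move=> N [].
move=> b Mb.
pose D := [set V : set (X * Y) | open V /\ Us (V `&` (C `*` M))].
have [|F [fF FD] nF] := @tube_finite_subcover X Y C b D cC (fun V DV => DV.1).
  move=> [c b'] [Cc /= ->].
  have [U UsU Ucb] := covUs (c, b) (conj Cc Mb).
  have [V [oV UV]] := UsM U UsU.
  by exists V; [split => //; rewrite -UV | move: Ucb; rewrite UV => -[]].
pose W := interior [set b' | C `*` [set b'] `<=` \bigcup_(V in F) V].
exists (W `&` M); last by split; [exact: nF | exact: Mb].
split; first by exists W; split => //; exact: open_interior.
exists ((fun V => V `&` (C `*` M)) @` F).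
  by split; [exact: finite_image | move=> _ [V FV <-]; exact: (FD V FV).2].
move=> [c b'] [Cc [/interior_subset sub Mb']].
have [V FV Vcb] := sub (c, b') (conj Cc erefl).
by exists (V `&` (C `*` M)); [exists V | split].
Qed.

Lemma menger_subspace_setX : menger_subspace M -> menger_subspace (C `*` M).
Proof.
move=> mM Us hUs.
have [Ns [hNs covM]] := mM _ (fun n => open_cover_tube_refinement _ (hUs n)).
have /choice [fam hfam] (nN : nat * set Y) : exists F, Ns nN.1 nN.2 ->
    (finite_set F /\ F `<=` Us nN.1) /\ C `*` nN.2 `<=` \bigcup_(U in F) U.
  case: nN => n N; have [/(hNs n).2 [_ [F ? ?]] | nNs] := pselect (Ns n N).
    by exists F.
  by exists set0.
exists (fun n => \bigcup_(N in Ns n) fam (n, N)); split.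
  move=> n; have [fNs _] := hNs n; split.
    by apply: bigcup_finite => // N /(hfam (n, N)) [[]].
  by move=> U [N /(hfam (n, N)) [[_ sub] _] /sub].
move=> [c b] [Cc Mb]; have [n _ [N NsN Nb]] := covM b Mb.
have [U famU Ucb] := (hfam (n, N) NsN).2 (c, b) (conj Cc Nb).
by exists n => //; exists U => //; exists N.
Qed.

End MengerSetX.

Section MengerOpenInProduct.
Context {X Y : topologicalType} {U : set (X * Y)}.
Hypothesis hU : menger_open U.

Lemma open_tube_set (C : set X) :
  MG_space Y -> compact C -> open [set b | C `*` [set b] `<=` U].
Proof.
move=> mgY cC; apply: mgY => M mM.
have [V [oV UV]] := hU _ (menger_subspace_setX cC mM).
exists [set b | C `*` [set b] `<=` V]; split; first exact: tube_lemma.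
have CbM b : M b -> C `*` [set b] `<=` C `*` M by move=> Mb [c b'] [Cc /= ->].
apply/seteqP; split => b [CbU Mb]; split => //.
  exact: subset_of_trace_eq UV (CbM b Mb) CbU.
exact: subset_of_trace_eq (esym UV) (CbM b Mb) CbU.
Qed.

Lemma compact_nbhs_tube {x : X} {y : Y} :
  hausdorff_space X -> locally_compact [set: X] -> U (x, y) ->
  exists2 C, compact C /\ nbhs x C & C `*` [set y] `<=` U.
Proof.
move=> hX lcX Uxy.
have [K nK [cK _]] := lcX x I; rewrite withinET in nK.
have [V [oV UV]] := hU _ (menger_subspace_setX cK (menger_subspace1 y)).
have Vxy : V (x, y).
  have [] // : (V `&` (K `*` [set y])) (x, y).
  by rewrite -UV; split => //; split => //; exact: nbhs_singleton nK.
have [[A B] /= [nA nB] AB] : nbhs (x, y) V by apply: open_nbhs_nbhs.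
have [P nP PAK] := compact_regular hX cK nK (filterI nA nK).
exists (closure P).
  split; last by apply: filterS nP; exact: subset_closure.
  exact: (@subclosed_compact X (closure P) K (@closed_closure X P) cK
    (fun z Pz => (PAK z Pz).2)).
apply: (@subset_of_trace_eq _ (closure P `*` [set y]) _ _ _ (esym UV)).
  by move=> [c b'] [/PAK [_ Kc] /= ->].
move=> [c b'] [/PAK [Ac _] /= ->]; apply: AB.
by split => //; exact: nbhs_singleton nB.
Qed.

End MengerOpenInProduct.

Theorem proposition4p22 (X Y : topologicalType) :
  hausdorff_space X -> locally_compact [set: X] -> MG_space Y ->
  MG_space (X * Y)%type.
Proof.
move=> hX lcX mgY U hU; rewrite openE => -[x y] Uxy.
have [C [cC nC] CyU] := compact_nbhs_tube hU hX lcX Uxy.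
exists (C, [set b | C `*` [set b] `<=` U]) => /=.
  split => //; apply: open_nbhs_nbhs.
  by split; [exact: open_tube_set | exact: CyU].
by move=> [a b] [Ca Wb]; apply: Wb.
Qed.
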